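(* Let $G$ be a finite abelian group, let $I,\Lambda$ be non-empty sets, and let $P=(p_{\lambda i})$ be a $\Lambda\times I$ matrix with entries in $G\cup\{\mathbf{0}\}$. Let $A$ be a finite alphabet and let $L\subseteq A^{+}$ be a language recognised by the Rees zero-matrix semigroup $M^{0}[G;I,\Lambda;P]$. Then $L$ has generalised star-height at most $1$. The same conclusion holds for languages recognised by the Rees matrix semigroup $M[G;I,\Lambda;P]$ (where all entries of $P$ lie in $G$).
   Context: For a semigroup $S$ without zero, non-empty sets $I,\Lambda$ and a $\Lambda\times I$ matrix $P=(p_{\lambda i})$ with entries in $S\cup\{\mathbf{0}\}$ ($\mathbf{0}$ a new symbol), the Rees zero-matrix semigroup $M^{0}[S;I,\Lambda;P]$ is the set $(I\times S\times\Lambda)\cup\{\mathbf{0}\}$ with multiplication $(i,s,\lambda)(j,t,\mu)=(i,s\,p_{\lambda j}\,t,\mu)$ if $p_{\lambda j}\neq\mathbf{0}$, $(i,s,\lambda)(j,t,\mu)=\mathbf{0}$ if $p_{\lambda j}=\mathbf{0}$, and $x\mathbf{0}=\mathbf{0}x=\mathbf{0}$ for all $x$. If all entries of $P$ lie in $S$, then $I\times S\times\Lambda$ with the same multiplication is the Rees matrix semigroup $M[S;I,\Lambda;P]$. A language $L\subseteq A^{+}$ is recognised by a semigroup $T$ if there is a semigroup morphism $\psi:A^{+}\to T$ and a subset $X\subseteq T$ with $L=X\psi^{-1}$. Generalised regular expressions over $A$: $\emptyset$, $\varepsilon$ and each letter $a\in A$ are expressions; if $E,F$ are expressions then so are $E\cup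 F$, $EF$, $E^{\ast}$ and $E^{c}$ (complement in $A^{\ast}$). The star-height $h$ of an expression: $h(\emptyset)=h(\varepsilon)=h(a)=0$, $h(E\cup F)=h(EF)=\max\{h(E),h(F)\}$, $h(E^{\ast})=h(E)+1$, $h(E^{c})=h(E)$. The (generalised) star-height of a language is the minimum of $h(E)$ over all expressions $E$ representing it. *)

From HB Require Import structures.
From Stdlib Require List.
From mathcomp Require Import all_boot all_fingroup.
Set Implicit Arguments. Unset Strict Implicit. Unset Printing Implicit Defensive.

Local Open Scope group_scope.

(* M^0[G; I, Lambda; P] : carrier (I * G * Lambda) + {0}, 0 encoded as None;
   matrix entries in G + {0}, 0 encoded as None. *)
Definition rees0_mul (gT : finGroupType) (I L : Type) (P : L -> I -> option gT)
  (x y : option (I * gT * L)) : option (I * gT * L) :=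
  match x, y with
  | Some (i, s, l), Some (j, t, m) =>
      match P l j with
      | Some p => Some (i, s * p * t, m)
      | None => None
      end
  | _, _ => None
  end.

Definition rees_mul (gT : finGroupType) (I L : Type) (P : L -> I -> gT)
  (x y : I * gT * L) : I * gT * L :=
  let: (i, s, l) := x in let: (j, t, m) := y in (i, s * P l j * t, m).

Local Close Scope group_scope.

(* L ⊆ A^+ is recognised by the semigroup (T, mul) if there is a semigroup
   morphism psi : A^+ -> T (a map on nonempty words, multiplicative on
   nonempty words; its value on the empty word is irrelevant) and X ⊆ T
   with L = X psi^{-1}. *)
Definition recognised (A : Type) (T : Type) (mul : T -> T -> T)
  (L : seq A -> Prop) : Prop :=
  exists psi : seq A -> T,
    (forall u v, u <> [::] -> v <> [::] -> psi (u ++ v) = mul (psi u) (psi v)) /\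
    exists X : T -> Prop, forall w, L w <-> (w <> [::] /\ X (psi w)).

Inductive gregex (A : Type) : Type :=
  | RE_empty
  | RE_eps
  | RE_letter of A
  | RE_union of gregex A & gregex A
  | RE_concat of gregex A & gregex A
  | RE_star of gregex A
  | RE_compl of gregex A.

Arguments RE_empty {A}.
Arguments RE_eps {A}.

Fixpoint gregex_lang (A : Type) (E : gregex A) : seq A -> Prop :=
  match E with
  | RE_empty => fun _ => False
  | RE_eps => fun w => w = [::]
  | RE_letter a => fun w => w = [:: a]
  | RE_union E1 E2 => fun w => gregex_lang E1 w \/ gregex_lang E2 w
  | RE_concat E1 E2 => fun w =>
      exists u v, w = u ++ v /\ gregex_lang E1 u /\ gregex_lang E2 v
  | RE_star E1 => fun w =>
      exists ws : seq (seq A), w = flatten ws /\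
        (forall u, Stdlib.Lists.List.In u ws -> gregex_lang E1 u)
  | RE_compl E1 => fun w => ~ gregex_lang E1 w
  end.

Fixpoint star_height (A : Type) (E : gregex A) : nat :=
  match E with
  | RE_empty | RE_eps | RE_letter _ => 0
  | RE_union E1 E2 | RE_concat E1 E2 => maxn (star_height E1) (star_height E2)
  | RE_star E1 => (star_height E1).+1
  | RE_compl E1 => star_height E1
  end.

Definition gen_star_height_le (A : Type) (L : seq A -> Prop) (n : nat) : Prop :=
  exists E : gregex A, star_height E <= n /\ forall w, gregex_lang E w <-> L w.

From mathcomp Require Import all_boot all_fingroup.
From mathcomp Require Import abelian zify.
From Stdlib Require Import Classical.
Set Implicit Arguments. Unset Strict Implicit. Unset Printing Implicit Defensive.

(* In M^0[G; I, Lambda; P], a nonempty word a_1 ... a_k whose letters map to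
   (i_j, g_j, l_j) is sent to 0 unless every letter and every sandwich entry
   p_{l_j i_(j+1)} is nonzero, and otherwise to
   (i_1, g_1 p_{l_1 i_2} g_2 ... p_{l_(k-1) i_k} g_k, l_k).
   Grouping this product by the two-letter factors a_j a_(j+1) and using that G
   is abelian of exponent N, the image depends only on the first and last
   letters, on which two-letter factors occur, and on how often each occurs
   modulo N.  Hence L is a finite union of classes of this "profile".  Every
   condition in a profile is star-free, except counting occurrences of a factor
   modulo N, which needs a single star over blocks carrying exactly N
   occurrences each. *)

Section StarHeightClosure.
Variable A : Type.
Implicit Types (L : seq A -> Prop) (n : nat).

Lemma sh_ext n L L' :
  (forall w, L w <-> L' w) -> gen_star_height_le L n -> gen_star_height_le L' n.
Proof. by move=> eqL [E [hE LE]]; exists E; split=> // w; rewrite LE. Qed.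

Lemma sh0 n : gen_star_height_le (fun _ : seq A => False) n.
Proof. by exists RE_empty. Qed.

Lemma shT n : gen_star_height_le (fun _ : seq A => True) n.
Proof. by exists (RE_compl RE_empty); split=> // w /=; split=> // _ []. Qed.

Lemma sh_nil n : gen_star_height_le (fun w : seq A => w = [::]) n.
Proof. by exists RE_eps. Qed.

Lemma sh_letter n (a : A) : gen_star_height_le (fun w => w = [:: a]) n.
Proof. by exists (RE_letter a). Qed.

Lemma shU n L1 L2 : gen_star_height_le L1 n -> gen_star_height_le L2 n ->
  gen_star_height_le (fun w => L1 w \/ L2 w) n.
Proof.
move=> [E1 [h1 LE1]] [E2 [h2 LE2]]; exists (RE_union E1 E2).
by split=> [|w /=]; rewrite ?geq_max ?h1 ?LE1 ?LE2.
Qed.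

Lemma sh_cat n L1 L2 : gen_star_height_le L1 n -> gen_star_height_le L2 n ->
  gen_star_height_le (fun w => exists u v, w = u ++ v /\ L1 u /\ L2 v) n.
Proof.
move=> [E1 [h1 LE1]] [E2 [h2 LE2]]; exists (RE_concat E1 E2).
split=> [|w /=]; first by rewrite geq_max h1.
by split=> -[u [v [-> [L1u L2v]]]]; exists u, v; rewrite LE1 LE2 in L1u L2v *.
Qed.

Lemma shC n L : gen_star_height_le L n -> gen_star_height_le (fun w => ~ L w) n.
Proof. by move=> [E [hE LE]]; exists (RE_compl E); split=> // w /=; rewrite LE. Qed.

Lemma shI n L1 L2 : gen_star_height_le L1 n -> gen_star_height_le L2 n ->
  gen_star_height_le (fun w => L1 w /\ L2 w) n.
Proof.
move=> sh1 sh2; apply: sh_ext (shC (shU (shC sh1) (shC sh2))) => w.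
by split=> [|[? ?] []//]; move/not_or_and=> [/NNPP ? /NNPP ?].
Qed.

Lemma shI_const n L (Q : Prop) :
  gen_star_height_le L n -> gen_star_height_le (fun w => L w /\ Q) n.
Proof.
have [q|nq] := classic Q => shL; first by apply: sh_ext shL => w; tauto.
by apply: sh_ext (sh0 n) => w; tauto.
Qed.

Lemma sh_star L : gen_star_height_le L 0 ->
  gen_star_height_le
    (fun w => exists ws, w = flatten ws /\ forall u, List.In u ws -> L u) 1.
Proof.
move=> [E [hE LE]]; exists (RE_star E); split; first by rewrite /= ltnS.
by move=> w /=; split=> -[ws [-> Lws]]; exists ws; split=> // u /Lws /LE.
Qed.

Lemma sh_bigU n (T : finType) (F : T -> seq A -> Prop) :
  (forall t, gen_star_height_le (F t) n) ->
  gen_star_height_le (fun w => exists t, F t w) n.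
Proof.
move=> shF; suff /(_ (enum T)) : forall s : seq T,
    gen_star_height_le (fun w => exists2 t, t \in s & F t w) n.
  by apply: sh_ext => w; split=> [[t]|[t]]; [exists t | exists t; rewrite ?mem_enum].
elim=> [|t s IHs]; first by apply: sh_ext (sh0 n) => w; split=> // -[].
apply: sh_ext (shU (shF t) IHs) => w; split=> [[Ftw|[t' st' Ft'w]]|[t']].
- by exists t; rewrite ?mem_head.
- by exists t'; rewrite // inE st' orbT.
by rewrite inE => /orP[/eqP-> | st'] Ft'w; [left | right; exists t'].
Qed.

Lemma sh_bigI n (T : finType) (F : T -> seq A -> Prop) :
  (forall t, gen_star_height_le (F t) n) ->
  gen_star_height_le (fun w => forall t, F t w) n.
Proof.
move=> shF; apply: sh_ext (shC (sh_bigU (fun t => shC (shF t)))) => w.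
split=> [Fw t | Fw [t]//]; apply: NNPP => nFtw; exact: Fw (ex_intro _ t nFtw).
Qed.

End StarHeightClosure.

Definition factors (T : Type) (w : seq T) : seq (T * T) := zip w (behead w).

Lemma factors_cons2 (T : Type) (c d : T) w :
  factors [:: c, d & w] = (c, d) :: factors (d :: w).
Proof. by []. Qed.

Definition factor_count (T : eqType) (p : T * T) (w : seq T) : nat :=
  count_mem p (factors w).

Section Factors.
Variable A : eqType.
Implicit Types (p : A * A) (u v w : seq A).

Lemma factors_rcons_cat u x y v :
  factors (rcons u x ++ y :: v) = factors (rcons u x) ++ (x, y) :: factors (y :: v).
Proof.
elim: u => [|c [|d u] IHu] //.
by move: IHu; rewrite !rcons_cons !cat_cons => IHu; rewrite factors_cons2 IHu.
Qed.

Lemma ohead_revP x w : reflect (exists u, w = rcons u x) (ohead (rev w) == Some x).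
Proof.
apply: (iffP eqP) => [|[u ->]]; last by rewrite rev_rcons.
by case/lastP: w => [|u x'] //; rewrite rev_rcons => -[->]; exists u.
Qed.

Lemma ohead_rcons_cat u x v : ohead (rcons u x ++ v) = ohead (rcons u x).
Proof. by case: u. Qed.

Lemma ohead_rev_cons c w : ohead (rev (c :: w)) = Some (last c w).
Proof. by rewrite lastI rev_rcons. Qed.

Lemma factor_count_cat p u v x y :
  ohead (rev u) = Some x -> ohead v = Some y ->
  factor_count p (u ++ v) = factor_count p u + ((x, y) == p) + factor_count p v.
Proof.
move=> /eqP/ohead_revP[u' ->]; case: v => //= y' v [->].
by rewrite /factor_count factors_rcons_cat count_cat /= addnA.
Qed.

Lemma factor_count_split x y n w : n < factor_count (x, y) w ->
  exists u v, w = rcons u x ++ y :: v /\ factor_count (x, y) (rcons u x) = n.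
Proof.
elim: w n => [|c [|d w] IHw] n //.
have extend m : m < factor_count (x, y) (d :: w) -> exists u v,
    c :: d :: w = rcons u x ++ y :: v /\
    factor_count (x, y) (rcons u x) = ((c, d) == (x, y)) + m.
  move=> /IHw[u [v [duv cu]]]; exists (c :: u), v; split; first by rewrite /= -duv.
  have [s us] : exists s, rcons u x = d :: s.
    case: u duv {cu} => [|e u] /= [-> _]; eexists; reflexivity.
  by rewrite rcons_cons us /factor_count factors_cons2 /= -us -cu.
move=> lt_n; rewrite /factor_count factors_cons2 /= in lt_n.
case cd: ((c, d) == (x, y)) lt_n => /= lt_n; last by have := extend n lt_n; rewrite cd.
case: n lt_n => [|n] lt_n; last by have := extend n lt_n; rewrite cd.
by move/eqP: cd => [-> ->]; exists [::], w.
Qed.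

Lemma mem_factors_split x y w :
  (x, y) \in factors w <->
  exists u v, w = u ++ v /\ ohead (rev u) = Some x /\ ohead v = Some y.
Proof.
rewrite -has_pred1 has_count -/(factor_count (x, y) w); split.
  by move=> /(@factor_count_split _ _ 0)[u [v [-> _]]]; exists (rcons u x), (y :: v);
    rewrite rev_rcons.
by move=> [u [v [-> [ux vy]]]]; rewrite (factor_count_cat _ ux vy) eqxx addn1.
Qed.

End Factors.

Section FactorLanguages.
Variable A : eqType.
Implicit Types (u v w : seq A) (x y : A).

Lemma sh_ohead n (o : option A) : gen_star_height_le (fun w => ohead w = o) n.
Proof.
case: o => [y|]; last by apply: sh_ext (sh_nil _ n) => -[].
apply: sh_ext (sh_cat (sh_letter n y) (shT _ n)) => w.
by split=> [[u [v [-> [-> _]]]] | ] //; case: w => //= y' v [->]; exists [:: y], v.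
Qed.

Lemma sh_ohead_rev n (o : option A) :
  gen_star_height_le (fun w => ohead (rev w) = o) n.
Proof.
case: o => [x|]; last first.
  by apply: sh_ext (sh_nil _ n) => w; split=> [-> //|]; case/lastP: w => // u x;
    rewrite rev_rcons.
apply: sh_ext (sh_cat (shT _ n) (sh_letter n x)) => w; split.
  by move=> [u [v [-> [_ ->]]]]; rewrite cats1 rev_rcons.
by move/eqP/ohead_revP=> [u ->]; exists u, [:: x]; rewrite cats1.
Qed.

Lemma sh_mem_factors n (p : A * A) (b : bool) :
  gen_star_height_le (fun w => (p \in factors w) = b) n.
Proof.
case: p => x y.
have sh_mem : gen_star_height_le (fun w => (x, y) \in factors w) n.
  apply: sh_ext (sh_cat (sh_ohead_rev n (Some x)) (sh_ohead n (Some y))) => w.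
  by rewrite mem_factors_split.
case: b; first by apply: sh_ext sh_mem => w; split=> [->|].
by apply: sh_ext (shC sh_mem) => w; split=> [/negP/negbTE | ->].
Qed.

Lemma sh_factor_count n x y m :
  gen_star_height_le (fun w => factor_count (x, y) w = m) n.
Proof.
have sh_count0 : gen_star_height_le (fun w => factor_count (x, y) w = 0) n.
  apply: sh_ext (sh_mem_factors n (x, y) false) => w.
  by rewrite /factor_count -has_pred1 has_count lt0n; split=> [/negbFE/eqP | ->].
elim: m => [//|m IHm].
apply: sh_ext (sh_cat (shI IHm (sh_ohead_rev n (Some x)))
                      (shI sh_count0 (sh_ohead n (Some y)))) => w; split.
  move=> [u [v [-> [[cu ux] [cv vy]]]]].
  by rewrite (factor_count_cat _ ux vy) cu cv eqxx addn0 addn1.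
move=> cw; have /factor_count_split[u [v [ew cu]]] : m < factor_count (x, y) w.
  by rewrite cw.
have ux : ohead (rev (rcons u x)) = Some x by rewrite rev_rcons.
exists (rcons u x), (y :: v); do !split=> //.
by move: cw; rewrite ew (factor_count_cat (v := y :: v) _ ux erefl) cu eqxx; lia.
Qed.

Definition factor_block x y n w :=
  [/\ ohead w = Some y, ohead (rev w) = Some x & factor_count (x, y) w = n].

Lemma factor_count_flatten_blocks x y n ws v :
  (forall b, List.In b ws -> factor_block x y n b) -> ohead v = Some y ->
  ohead (flatten ws ++ v) = Some y /\
  factor_count (x, y) (flatten ws ++ v) = size ws * n.+1 + factor_count (x, y) v.
Proof.
move=> blocks vy; elim: ws blocks => [|b ws IHws] blocks //=.
have [hb /[dup] bx /eqP/ohead_revP[u eb] cb] := blocks b (or_introl erefl).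
have [hy cw] := IHws (fun b' inb' => blocks b' (or_intror inb')).
rewrite -catA (factor_count_cat _ bx hy) cw cb eqxx eb ohead_rcons_cat -eb.
by split=> //; lia.
Qed.

Lemma flatten_blocks_split x y n k v :
  ohead v = Some y -> factor_count (x, y) v = k * n.+1 ->
  exists ws s, [/\ v = flatten ws ++ s, forall b, List.In b ws -> factor_block x y n b,
    ohead s = Some y & factor_count (x, y) s = 0].
Proof.
elim: k v => [|k IHk] v vy cv; first by exists [::], v.
have /factor_count_split[u [v' [ev cu]]] : n < factor_count (x, y) v.
  by rewrite cv mulSn; lia.
have ux : ohead (rev (rcons u x)) = Some x by rewrite rev_rcons.
have cv' : factor_count (x, y) (y :: v') = k * n.+1.
  by move: cv; rewrite ev (factor_count_cat (v := y :: v') _ ux erefl) cu eqxx mulSn; lia.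
have [ws [s [ev' blocks sy cs]]] := IHk (y :: v') erefl cv'.
exists (rcons u x :: ws), s; split=> //; first by rewrite ev ev' catA.
by move=> b [<- | /blocks //]; split=> //; rewrite -(ohead_rcons_cat u x (y :: v')) -ev.
Qed.

(* A count congruent to r that is not r itself is r + n.+1 + q * n.+1: cut
   after the (r + n).+1-st occurrence and split the rest into q blocks, each
   with n inner occurrences plus the one across its right end. *)
Lemma sh_factor_count_mod N r (p : A * A) : 0 < N -> r < N ->
  gen_star_height_le (fun w => factor_count p w %% N = r) 1.
Proof.
case: p N => x y [//|n] _ r_le.
have sh_block : gen_star_height_le (factor_block x y n) 0.
  apply: sh_ext (shI (sh_ohead 0 (Some y))
                     (shI (sh_ohead_rev 0 (Some x)) (sh_factor_count 0 x y n))) => w.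
  by split=> [[? [? ?]] | []].
apply: sh_ext (shU (sh_factor_count 1 x y r)
  (sh_cat (sh_cat (shI (sh_factor_count 1 x y (r + n)) (sh_ohead_rev 1 (Some x)))
                  (sh_star sh_block))
          (shI (sh_factor_count 1 x y 0) (sh_ohead 1 (Some y))))) => w; split.
  case=> [-> | [ub [s [-> [[u [b [-> [[cu ux] [ws [-> blocks]]]]]] [cs sy]]]]]].
    exact: modn_small.
  have [hy cb] := factor_count_flatten_blocks blocks sy.
  rewrite -catA (factor_count_cat _ ux hy) cb cu cs eqxx.
  by rewrite (_ : _ + _ = (size ws).+1 * n.+1 + r) ?modnMDl ?modn_small // mulSn; lia.
move=> cw; have [-> | ne] := eqVneq (factor_count (x, y) w) r; [by left | right].
have [q cw'] : exists q, factor_count (x, y) w = r + n.+1 + q * n.+1.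
  move: (divn_eq (factor_count (x, y) w) n.+1) ne; rewrite cw.
  case: (_ %/ _) => [|q] ->; first by rewrite mul0n add0n eqxx.
  by exists q; rewrite mulSn; lia.
have /factor_count_split[u [v [ew cu]]] : r + n < factor_count (x, y) w.
  by rewrite cw'; lia.
have ux : ohead (rev (rcons u x)) = Some x by rewrite rev_rcons.
have cv : factor_count (x, y) (y :: v) = q * n.+1.
  by move: cw'; rewrite ew (factor_count_cat (v := y :: v) _ ux erefl) cu eqxx; lia.
have [ws [s [ev blocks sy cs]]] := flatten_blocks_split (v := y :: v) erefl cv.
exists (rcons u x ++ flatten ws), s; split; first by rewrite ew ev catA.
by split=> //; exists (rcons u x), (flatten ws); do !split=> //; exists ws.
Qed.

End FactorLanguages.

Section Profile.
Variables (A : finType) (N : nat).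
Hypothesis N_gt0 : 0 < N.

Definition profile (w : seq A) :
    option A * option A * {ffun A * A -> bool} * {ffun A * A -> 'I_N} :=
  (ohead w, ohead (rev w), [ffun p => p \in factors w],
   [ffun p => Ordinal (ltn_pmod (factor_count p w) N_gt0)]).

Lemma sh_profile pi : gen_star_height_le (fun w => profile w = pi) 1.
Proof.
case: pi => [[[oa ob] occurs] residue].
apply: sh_ext (shI (sh_ohead 1 oa) (shI (sh_ohead_rev 1 ob)
  (shI (sh_bigI (fun p : A * A => sh_mem_factors 1 p (occurs p)))
       (sh_bigI (fun p : A * A => sh_factor_count_mod p N_gt0 (ltn_ord (residue p))))))).
move=> w; split=> [[<- [<- [occ_w res_w]]] | [-> -> /ffunP occ_w /ffunP res_w]].
  congr (_, _, _, _); apply/ffunP => p; rewrite ffunE ?occ_w //.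
  by apply: val_inj; rewrite /= res_w.
by do 2!split=> //; split=> p; rewrite -?occ_w -?res_w ffunE.
Qed.

End Profile.

Section AbelianProducts.
Variable gT : finGroupType.
Hypothesis mulgC : forall x y : gT, commute x y.
Local Open Scope group_scope.

Lemma prod_seq_count (T : finType) (F : T -> gT) (s : seq T) :
  \prod_(x <- s) F x = \prod_x F x ^+ count_mem x s.
Proof.
elim: s => [|a s IHs]; first by rewrite big_nil big1.
rewrite big_cons IHs.
under [RHS]eq_bigr => x _ do rewrite [count_mem x _]/= expgD.
rewrite prodgM_commute => [|x y _ _]; last exact: mulgC.
congr (_ * _); rewrite -(@big_pred1_eq _ 1 *%g _ a F) big_mkcond.
apply: eq_bigr => x _.
case: eqP => [-> | /eqP ne_xa]; first by rewrite eqxx expg1.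
by rewrite eq_sym (negbTE ne_xa) expg0.
Qed.

Lemma prod_seq_count_mod (T : finType) (F : T -> gT) N (s1 s2 : seq T) :
  (forall x, F x ^+ N = 1) ->
  (forall x, count_mem x s1 = count_mem x s2 %[mod N]) ->
  \prod_(x <- s1) F x = \prod_(x <- s2) F x.
Proof.
move=> FN eq_count; rewrite (prod_seq_count F s1) (prod_seq_count F s2).
apply: eq_bigr => x _.
by rewrite -(expg_mod _ (FN x)) eq_count expg_mod.
Qed.

End AbelianProducts.

Section ReesWordValue.
Variables (gT : finGroupType) (I Lam : Type) (A : finType).
Variables (P : Lam -> I -> option gT) (f : A -> option (I * gT * Lam)).
Local Open Scope group_scope.

(* The factor cd contributes g_c p_{l_c i_d}; None stands for 0. *)
Definition factor_weight (p : A * A) : option gT :=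
  if (f p.1, f p.2) is (Some (_, g, l), Some (j, _, _)) then omap ( *%g g) (P l j)
  else None.

Definition word_value (c : A) (t : seq A) : option (I * gT * Lam) :=
  if (f c, f (last c t)) is (Some (i, _, _), Some (_, h, m)) then
    if all (fun p => factor_weight p) (factors (c :: t)) then
      Some (i, \prod_(p <- factors (c :: t)) odflt 1 (factor_weight p) * h, m)
    else None
  else None.

Lemma rees0_word_value (psi : seq A -> option (I * gT * Lam)) :
  (forall u v, u <> [::] -> v <> [::] -> psi (u ++ v) = rees0_mul P (psi u) (psi v)) ->
  (forall a, psi [:: a] = f a) ->
  forall c t, psi (c :: t) = word_value c t.
Proof.
move=> psi_mul psi1 c t; elim: t c => [|d t IHt] c.
  by rewrite psi1 /word_value /=; case: (f c) => [[[i g] l]|] //; rewrite big_nil mul1g.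
rewrite -cat1s psi_mul // psi1 IHt /word_value factors_cons2 big_cons /=.
rewrite [factor_weight (c, d)]/factor_weight /=.
case: (f c) => [[[i g] l]|] //.
case: (f (last d t)) => [[[j' h] m]|]; case: (f d) => [[[j g'] l']|] //=.
case: all; rewrite ?andbF //=.
by case: (P l j) => [p|] //=; rewrite mulgA.
Qed.

Lemma word_value_eq N c t t' :
  (forall x y : gT, commute x y) -> (forall g : gT, g ^+ N = 1) ->
  last c t = last c t' -> factors (c :: t) =i factors (c :: t') ->
  (forall p, factor_count p (c :: t) = factor_count p (c :: t') %[mod N]) ->
  word_value c t = word_value c t'.
Proof.
move=> mulgC expN eq_last eq_factors eq_count; rewrite /word_value eq_last.
by rewrite (eq_all_r eq_factors) (prod_seq_count_mod mulgC (fun p => expN _) eq_count).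
Qed.

End ReesWordValue.

Lemma rees0_star_height (gT : finGroupType) (I Lam : Type) (A : finType)
    (P : Lam -> I -> option gT) (L : seq A -> Prop) :
  abelian [set: gT] -> recognised (rees0_mul P) L -> gen_star_height_le L 1.
Proof.
move=> gT_abelian [psi [psi_mul [X LX]]].
have mulgC (x y : gT) : commute x y by apply: (centsP gT_abelian); rewrite inE.
pose N := exponent [set: gT]; have N_gt0 : 0 < N := exponent_gt0 _.
have expN (g : gT) : (g ^+ N = 1)%g by rewrite expg_exponent ?inE.
have psi_value := rees0_word_value psi_mul (fun a => erefl (psi [:: a])).
have L_profile w w' : profile N_gt0 w = profile N_gt0 w' -> L w' -> L w.
  case: w' => [|c t] []; first by move=> _ _ _ _ /LX[].
  case: w => [|c' t'] // [->] eq_last /ffunP eq_factors /ffunP eq_count /LX[_ Xw'].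
  apply/LX; split=> //; suff -> : psi (c :: t') = psi (c :: t) by [].
  rewrite !psi_value; apply: word_value_eq mulgC expN _ _ _ => [|p|p].
  - by move: eq_last; rewrite !ohead_rev_cons => -[].
  - by have := eq_factors p; rewrite !ffunE.
  by have := congr1 val (eq_count p); rewrite !ffunE.
apply: sh_ext (sh_bigU (fun pi => shI_const
  (exists w', profile N_gt0 w' = pi /\ L w') (sh_profile N_gt0 pi))) => w.
split=> [[pi [<- [w' [eq_pi Lw']]]] | Lw]; first exact: L_profile (esym eq_pi) Lw'.
by exists (profile N_gt0 w); split=> //; exists w.
Qed.

Theorem theorem3p6 (gT : finGroupType) (Hab : abelian [set: gT])
  (I Lam : Type) (HI : inhabited I) (HLam : inhabited Lam) (A : finType) :
  (forall (P : Lam -> I -> option gT) (L : seq A -> Prop),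
     recognised (rees0_mul P) L -> gen_star_height_le L 1) /\
  (forall (P : Lam -> I -> gT) (L : seq A -> Prop),
     recognised (rees_mul P) L -> gen_star_height_le L 1).
Proof.
split=> P L; first exact: rees0_star_height.
move=> [psi [psi_mul [X LX]]].
apply: (@rees0_star_height _ _ _ _ (fun l i => Some (P l i))) => //.
exists (fun w => Some (psi w)); split.
  move=> u v nu nv; rewrite psi_mul //.
  by case: (psi u) => [[i s] l]; case: (psi v) => [[j t] m].
by exists (fun o => if o is Some x then X x else False).
Qed.
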